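(* Let $A\in\mathbb{C}^{m\times n}$, $B\in\mathbb{C}^{n\times p}$, $C\in\mathbb{C}^{p\times q}$ and $M=ABC$. Then each of the following sets is contained in $\{M^{(1)}\}$: $\{(A^{(1)}M)^{(1)}A^{(1)}\}$, $\{C^{(1)}(MC^{(1)})^{(1)}\}$, $\{(A^{*}M)^{(1)}A^{*}\}$, $\{C^{*}(MC^{*})^{(1)}\}$, $\{(AA^{*}M)^{(1)}AA^{*}\}$, $\{C^{*}C(MC^{*}C)^{(1)}\}$, $\{C^{(1)}(A^{(1)}MC^{(1)})^{(1)}A^{(1)}\}$, $\{C^{*}(A^{*}MC^{*})^{(1)}A^{*}\}$, $\{[(AB)^{(1)}M]^{(1)}(AB)^{(1)}\}$, $\{(BC)^{(1)}[M(BC)^{(1)}]^{(1)}\}$, $\{[(AB)^{*}M]^{(1)}(AB)^{*}\}$, $\{(BC)^{*}[M(BC)^{*}]^{(1)}\}$, $\{[(ABB^{(1)})^{(1)}M]^{(1)}(ABB^{(1)})^{(1)}\}$, $\{(B^{(1)}BC)^{(1)}[M(B^{(1)}BC)^{(1)}]^{(1)}\}$, $\{[(ABB^{*})^{(1)}M]^{(1)}(ABB^{*})^{(1)}\}$, $\{(B^{*}BC)^{(1)}[M(B^{*}BC)^{(1)}]^{(1)}\}$, $\{C^{*}C(AA^{*}MC^{*}C)^{(1)}AA^{*}\}$, $\{(BC)^{(1)}[(AB)^{(1)}M(BC)^{(1)}]^{(1)}(AB)^{(1)}\}$, $\{(BC)^{*}[(AB)^{*}M(BC)^{*}]^{(1)}(AB)^{*}\}$,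 $\{(B^{(1)}BC)^{(1)}[(ABB^{(1)})^{(1)}M(B^{(1)}BC)^{(1)}]^{(1)}(ABB^{(1)})^{(1)}\}$, $\{(B^{*}BC)^{(1)}[(ABB^{*})^{(1)}M(B^{*}BC)^{(1)}]^{(1)}(ABB^{*})^{(1)}\}$, $\{(B^{(1)}BC)^{*}[(ABB^{(1)})^{*}M(B^{(1)}BC)^{*}]^{(1)}(ABB^{(1)})^{*}\}$, $\{(B^{*}BC)^{*}[(ABB^{*})^{*}M(B^{*}BC)^{*}]^{(1)}(ABB^{*})^{*}\}$.
   Context: For a complex matrix $X$, $X^*$ is its conjugate transpose. For $X\in\mathbb{C}^{p\times q}$, a matrix $G\in\mathbb{C}^{q\times p}$ is called an $\{i,\ldots,j\}$-generalized inverse of $X$ (written $X^{(i,\ldots,j)}$) if it satisfies the equations numbered $i,\ldots,j$ among the four Penrose equations (i) $XGX=X$, (ii) $GXG=G$, (iii) $(XG)^*=XG$, (iv) $(GX)^*=GX$; $\{X^{(i,\ldots,j)}\}$ denotes the set of all such $G$. For a matrix expression involving generalized inverses, $\{\cdot\}$ denotes the set of all values of the expression as each generalized inverse occurring in it ranges over all admissible choices; repeated occurrences of the same symbol (e.g. $(AB)^{(1)}$ appearing twice) denote one and the same choice, and a generalized inverse of a matrix that itself contains a chosen generalized inverse is taken with respect to that chosen matrix. *)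

(* Complex matrices are modelled over an arbitrary
   numClosedFieldType F (algebraically closed field with conjugation z^*,
   e.g. algC); this covers C^{m x n}. *)
From HB Require Import structures.
From mathcomp Require Import all_boot all_order all_algebra.
Set Implicit Arguments. Unset Strict Implicit. Unset Printing Implicit Defensive.
Import Order.TTheory GRing.Theory Num.Theory.
Local Open Scope ring_scope.

Definition ctr (F : numClosedFieldType) (m n : nat) (X : 'M[F]_(m, n)) : 'M[F]_(n, m) :=
  (map_mx (@Num.conj F) X)^T.

Definition g1 (F : numClosedFieldType) (p q : nat) (X : 'M[F]_(p, q)) (G : 'M[F]_(q, p)) : Prop :=
  X *m G *m X = X.

(* If L and R do not lose rank on M, i.e. L *m M *m Y = 0 forces M *m Y = 0 and
   Y *m M *m R = 0 forces Y *m M = 0, then R (L M R)^(1) L is a {1}-inverse of M: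
   cancelling L on the left of L M R X L M R = L M R and then R on the right
   gives M R X L M = M.  All 23 choices of L and R in the theorem have this
   property, either because they come from a {1}-inverse of a left (right)
   factor of M, or because W^* W Y = 0 forces W Y = 0. *)
From HB Require Import structures.
From mathcomp Require Import all_boot all_order all_algebra.
Import GRing.Theory Num.Theory.
Local Open Scope ring_scope.

Set Implicit Arguments.
Unset Strict Implicit.

Section ConjugateTranspose.
Variable F : numClosedFieldType.

Lemma ctrK m n (W : 'M[F]_(m, n)) : ctr (ctr W) = W.
Proof. by apply/matrixP => i j; rewrite /ctr !mxE conjCK. Qed.

Lemma ctrM m n k (X : 'M[F]_(m, n)) (Y : 'M_(n, k)) :
  ctr (X *m Y) = ctr Y *m ctr X.
Proof. by rewrite /ctr map_mxM trmx_mul. Qed.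

Lemma ctr0 m n : ctr (0 : 'M[F]_(m, n)) = 0.
Proof. by apply/matrixP => i j; rewrite /ctr !mxE conjC0. Qed.

(* The diagonal entry (j, j) of W^* W is the squared norm of column j of W. *)
Lemma ctr_mulmx_self_eq0 m n (W : 'M[F]_(m, n)) : ctr W *m W = 0 -> W = 0.
Proof.
move=> /matrixP WW0; apply/matrixP => i j; move: (WW0 j j).
rewrite !mxE /ctr; under eq_bigr do rewrite !mxE mulrC -normCK.
move=> /(psumr_eq0P (fun k _ => exprn_ge0 2 (normr_ge0 (W k j))))/(_ i isT)/eqP.
by rewrite expf_eq0 /= normr_eq0 => /eqP.
Qed.

End ConjugateTranspose.

Section RankPreservingFactors.
Variable F : numClosedFieldType.

Definition mx_lcancel s m k (L : 'M[F]_(s, m)) (K : 'M_(m, k)) :=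
  forall r (Y : 'M_(k, r)), L *m K *m Y = 0 -> K *m Y = 0.

Definition mx_rcancel q t k (R : 'M[F]_(q, t)) (K : 'M_(k, q)) :=
  forall r (Y : 'M_(r, k)), Y *m K *m R = 0 -> Y *m K = 0.

Lemma mx_lcancel_retract s m k (L : 'M[F]_(s, m)) (K : 'M_(m, k)) (P : 'M_(m, s)) :
  P *m L *m K = K -> mx_lcancel L K.
Proof. by move=> PLK r Y LKY0; rewrite -PLK -!mulmxA (mulmxA L) LKY0 !mulmx0. Qed.

Lemma mx_rcancel_retract q t k (R : 'M[F]_(q, t)) (K : 'M_(k, q)) (P : 'M_(t, q)) :
  K *m R *m P = K -> mx_rcancel R K.
Proof. by move=> KRP r Y YKR0; rewrite -KRP !mulmxA YKR0 !mul0mx. Qed.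

Lemma mx_lcancel_g1 m k (K : 'M[F]_(m, k)) (G : 'M_(k, m)) : g1 K G -> mx_lcancel G K.
Proof. exact: mx_lcancel_retract. Qed.

Lemma mx_rcancel_g1 q k (K : 'M[F]_(k, q)) (G : 'M_(q, k)) : g1 K G -> mx_rcancel G K.
Proof. by move=> KGK; apply: (mx_rcancel_retract (P := K)). Qed.

Lemma mx_lcancelMr s m k l (L : 'M[F]_(s, m)) (K : 'M_(m, k)) (N : 'M_(k, l)) :
  mx_lcancel L K -> mx_lcancel L (K *m N).
Proof. by move=> hL r Y; rewrite -!mulmxA => LKNY; apply: hL; rewrite -!mulmxA. Qed.

Lemma mx_rcancelMl q t k l (R : 'M[F]_(q, t)) (K : 'M_(k, q)) (N : 'M_(l, k)) :
  mx_rcancel R K -> mx_rcancel R (N *m K).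
Proof. by move=> hR r Y; rewrite !mulmxA => /hR. Qed.

Lemma mx_lcancelM s s' m k (L1 : 'M[F]_(s, m)) (L2 : 'M_(s', s)) (K : 'M_(m, k)) :
  mx_lcancel L1 K -> mx_lcancel L2 (L1 *m K) -> mx_lcancel (L2 *m L1) K.
Proof. by move=> h1 h2 r Y; rewrite -(mulmxA L2) => /h2/h1. Qed.

Lemma mx_rcancelM t t' q k (R1 : 'M[F]_(q, t)) (R2 : 'M_(t, t')) (K : 'M_(k, q)) :
  mx_rcancel R1 K -> mx_rcancel R2 (K *m R1) -> mx_rcancel (R1 *m R2) K.
Proof. by move=> h1 h2 r Y; rewrite mulmxA -(mulmxA Y) => /h2; rewrite mulmxA => /h1. Qed.

Lemma mx_lcancel_ctr m k (K : 'M[F]_(m, k)) : mx_lcancel (ctr K) K.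
Proof.
move=> r Y KKY0; apply: ctr_mulmx_self_eq0.
by rewrite ctrM -mulmxA (mulmxA (ctr K)) KKY0 mulmx0.
Qed.

Lemma mx_rcancel_ctr q k (K : 'M[F]_(k, q)) : mx_rcancel (ctr K) K.
Proof.
move=> r Y YKK0; rewrite -[Y *m K]ctrK (@ctr_mulmx_self_eq0 _ _ _ (ctr (Y *m K))) ?ctr0 //.
by rewrite ctrK ctrM mulmxA YKK0 mul0mx.
Qed.

Lemma mx_lcancel_ctrl m k (K : 'M[F]_(m, k)) : mx_lcancel K (ctr K).
Proof. by rewrite -{1}(ctrK K); exact: mx_lcancel_ctr. Qed.

Lemma mx_rcancel_ctrl q k (K : 'M[F]_(k, q)) : mx_rcancel K (ctr K).
Proof. by rewrite -{1}(ctrK K); exact: mx_rcancel_ctr. Qed.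

Lemma mx_lcancel_mul_ctr m k (K : 'M[F]_(m, k)) : mx_lcancel (K *m ctr K) K.
Proof. exact/mx_lcancelM/mx_lcancelMr/mx_lcancel_ctrl/mx_lcancel_ctr. Qed.

Lemma mx_rcancel_ctr_mul q k (K : 'M[F]_(k, q)) : mx_rcancel (ctr K *m K) K.
Proof. exact/mx_rcancelM/mx_rcancelMl/mx_rcancel_ctrl/mx_rcancel_ctr. Qed.

Lemma mx_lcancel_ctr_mul_ctr m n k (K : 'M[F]_(m, n)) (T : 'M_(n, k)) :
  mx_lcancel (ctr (K *m T *m ctr T)) (K *m T).
Proof.
rewrite ctrM ctrK; apply/mx_lcancelM; first exact: mx_lcancel_ctr.
by rewrite ctrM -mulmxA; exact/mx_lcancelMr/mx_lcancel_ctrl.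
Qed.

Lemma mx_rcancel_ctr_ctr_mul q n k (T : 'M[F]_(k, n)) (K : 'M_(n, q)) :
  mx_rcancel (ctr (ctr T *m T *m K)) (T *m K).
Proof.
rewrite ctrM ctrM ctrK mulmxA -ctrM; apply/mx_rcancelM; first exact: mx_rcancel_ctr.
by rewrite ctrM mulmxA; exact/mx_rcancelMl/mx_rcancel_ctrl.
Qed.

Lemma mx_lcancel_g1_mul_g1 m n k (K : 'M[F]_(m, n)) (T : 'M_(n, k)) (T1 : 'M_(k, n))
    (G : 'M_(n, m)) :
  g1 T T1 -> g1 (K *m T *m T1) G -> mx_lcancel G (K *m T).
Proof.
move=> TT1T /mx_lcancel_g1/(mx_lcancelMr (N := T)).
by rewrite -!mulmxA (mulmxA T) TT1T.
Qed.

Lemma mx_rcancel_g1_g1_mul q n k (T : 'M[F]_(k, n)) (K : 'M_(n, q)) (T1 : 'M_(n, k))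
    (G : 'M_(q, n)) :
  g1 T T1 -> g1 (T1 *m T *m K) G -> mx_rcancel G (T *m K).
Proof.
move=> TT1T /mx_rcancel_g1/(mx_rcancelMl (N := T)).
by rewrite !mulmxA TT1T.
Qed.

(* With J := K T T^*, the identity J G J = J gives (J G K - K) T T^* = 0, and
   T^* may be cancelled. *)
Lemma mx_lcancel_g1_mul_ctr m n k (K : 'M[F]_(m, n)) (T : 'M_(n, k)) (G : 'M_(n, m)) :
  g1 (K *m T *m ctr T) G -> mx_lcancel G (K *m T).
Proof.
set J := K *m T *m ctr T => JGJ; apply: (mx_lcancel_retract (P := J)).
suff /eqP : (J *m G *m K - K) *m T = 0 by rewrite mulmxBl subr_eq0 mulmxA => /eqP.
apply: mx_rcancel_ctr.
have -> : (J *m G *m K - K) *m T *m ctr T = J *m G *m J - J by rewrite /J !mulmxBl !mulmxA.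
by rewrite JGJ subrr.
Qed.

Lemma mx_rcancel_g1_ctr_mul q n k (T : 'M[F]_(k, n)) (K : 'M_(n, q)) (G : 'M_(q, n)) :
  g1 (ctr T *m T *m K) G -> mx_rcancel G (T *m K).
Proof.
set J := ctr T *m T *m K => JGJ; apply: (mx_rcancel_retract (P := J)).
suff /eqP : T *m (K *m G *m J - K) = 0 by rewrite mulmxBr subr_eq0 !mulmxA => /eqP.
apply: mx_lcancel_ctr.
have -> : ctr T *m T *m (K *m G *m J - K) = J *m G *m J - J by rewrite /J !mulmxBr !mulmxA.
by rewrite JGJ subrr.
Qed.

End RankPreservingFactors.

Section SandwichedInverse.
Variables (F : numClosedFieldType) (m q : nat) (M : 'M[F]_(m, q)).

Lemma g1_sandwich s t (L : 'M_(s, m)) (R : 'M_(q, t)) (X : 'M_(t, s)) :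
  mx_lcancel L M -> mx_rcancel R M -> g1 (L *m M *m R) X -> g1 M (R *m X *m L).
Proof.
rewrite /g1 => hL hR LMRX.
have MRXLMR : M *m R *m X *m L *m M *m R = M *m R.
  apply/eqP; rewrite -subr_eq0 -(mulmxA M R) -!(mulmxA M) -mulmxBr; apply/eqP/hL.
  have -> : L *m M *m (R *m X *m L *m M *m R - R) =
    L *m M *m R *m X *m (L *m M *m R) - L *m M *m R by rewrite mulmxBr !mulmxA.
  by rewrite LMRX subrr.
apply/eqP; rewrite -subr_eq0 -[X in _ - X]mul1mx !mulmxA -mulmxBl; apply/eqP/hR.
by rewrite mulmxBl mul1mx mulmxBl MRXLMR subrr.
Qed.

Lemma g1_lmul s (L : 'M_(s, m)) (X : 'M_(q, s)) :
  mx_lcancel L M -> g1 (L *m M) X -> g1 M (X *m L).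
Proof.
move=> hL; rewrite -[L *m M]mulmx1 -[X *m L]mul1mx mulmxA.
by apply: g1_sandwich hL _ => r Y; rewrite mulmx1.
Qed.

Lemma g1_rmul t (R : 'M_(q, t)) (X : 'M_(t, m)) :
  mx_rcancel R M -> g1 (M *m R) X -> g1 M (R *m X).
Proof.
move=> hR; rewrite -[M *m R]mul1mx -[R *m X]mulmx1 mulmxA.
by apply: g1_sandwich _ hR => r Y; rewrite mul1mx.
Qed.

End SandwichedInverse.

Unset Implicit Arguments.

Theorem theorem3p3 (F : numClosedFieldType) (m n p q : nat)
  (A : 'M[F]_(m, n)) (B : 'M[F]_(n, p)) (C : 'M[F]_(p, q)) :
  let M := A *m B *m C in
  (forall (A1 : 'M_(n, m)) (X : 'M_(q, n)),
     g1 A A1 -> g1 (A1 *m M) X -> g1 M (X *m A1)) /\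
  (forall (C1 : 'M_(q, p)) (X : 'M_(p, m)),
     g1 C C1 -> g1 (M *m C1) X -> g1 M (C1 *m X)) /\
  (forall X : 'M_(q, n), g1 (ctr A *m M) X -> g1 M (X *m ctr A)) /\
  (forall X : 'M_(p, m), g1 (M *m ctr C) X -> g1 M (ctr C *m X)) /\
  (forall X : 'M_(q, m), g1 (A *m ctr A *m M) X -> g1 M (X *m (A *m ctr A))) /\
  (forall X : 'M_(q, m), g1 (M *m (ctr C *m C)) X -> g1 M (ctr C *m C *m X)) /\
  (forall (A1 : 'M_(n, m)) (C1 : 'M_(q, p)) (X : 'M_(p, n)),
     g1 A A1 -> g1 C C1 -> g1 (A1 *m M *m C1) X -> g1 M (C1 *m X *m A1)) /\
  (forall X : 'M_(p, n), g1 (ctr A *m M *m ctr C) X -> g1 M (ctr C *m X *m ctr A)) /\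
  (forall (G : 'M_(p, m)) (X : 'M_(q, p)),
     g1 (A *m B) G -> g1 (G *m M) X -> g1 M (X *m G)) /\
  (forall (G : 'M_(q, n)) (X : 'M_(n, m)),
     g1 (B *m C) G -> g1 (M *m G) X -> g1 M (G *m X)) /\
  (forall X : 'M_(q, p), g1 (ctr (A *m B) *m M) X -> g1 M (X *m ctr (A *m B))) /\
  (forall X : 'M_(n, m), g1 (M *m ctr (B *m C)) X -> g1 M (ctr (B *m C) *m X)) /\
  (forall (B1 : 'M_(p, n)) (G : 'M_(n, m)) (X : 'M_(q, n)),
     g1 B B1 -> g1 (A *m B *m B1) G -> g1 (G *m M) X -> g1 M (X *m G)) /\
  (forall (B1 : 'M_(p, n)) (G : 'M_(q, p)) (X : 'M_(p, m)),
     g1 B B1 -> g1 (B1 *m B *m C) G -> g1 (M *m G) X -> g1 M (G *m X)) /\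
  (forall (G : 'M_(n, m)) (X : 'M_(q, n)),
     g1 (A *m B *m ctr B) G -> g1 (G *m M) X -> g1 M (X *m G)) /\
  (forall (G : 'M_(q, p)) (X : 'M_(p, m)),
     g1 (ctr B *m B *m C) G -> g1 (M *m G) X -> g1 M (G *m X)) /\
  (forall X : 'M_(q, m),
     g1 (A *m ctr A *m M *m (ctr C *m C)) X -> g1 M (ctr C *m C *m X *m (A *m ctr A))) /\
  (forall (G1 : 'M_(p, m)) (G2 : 'M_(q, n)) (X : 'M_(n, p)),
     g1 (A *m B) G1 -> g1 (B *m C) G2 -> g1 (G1 *m M *m G2) X ->
     g1 M (G2 *m X *m G1)) /\
  (forall X : 'M_(n, p),
     g1 (ctr (A *m B) *m M *m ctr (B *m C)) X ->
     g1 M (ctr (B *m C) *m X *m ctr (A *m B))) /\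
  (forall (B1 : 'M_(p, n)) (G1 : 'M_(n, m)) (G2 : 'M_(q, p)) (X : 'M_(p, n)),
     g1 B B1 -> g1 (A *m B *m B1) G1 -> g1 (B1 *m B *m C) G2 ->
     g1 (G1 *m M *m G2) X -> g1 M (G2 *m X *m G1)) /\
  (forall (G1 : 'M_(n, m)) (G2 : 'M_(q, p)) (X : 'M_(p, n)),
     g1 (A *m B *m ctr B) G1 -> g1 (ctr B *m B *m C) G2 ->
     g1 (G1 *m M *m G2) X -> g1 M (G2 *m X *m G1)) /\
  (forall (B1 : 'M_(p, n)) (X : 'M_(p, n)),
     g1 B B1 ->
     g1 (ctr (A *m B *m B1) *m M *m ctr (B1 *m B *m C)) X ->
     g1 M (ctr (B1 *m B *m C) *m X *m ctr (A *m B *m B1))) /\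
  (forall X : 'M_(p, n),
     g1 (ctr (A *m B *m ctr B) *m M *m ctr (ctr B *m B *m C)) X ->
     g1 M (ctr (ctr B *m B *m C) *m X *m ctr (A *m B *m ctr B))).
Proof.
move=> M; rewrite {}/M.
have M_A : A *m B *m C = A *m (B *m C) by rewrite mulmxA.
have M_B1 (B1 : 'M_(p, n)) : g1 B B1 -> A *m B *m C = A *m B *m B1 *m (B *m C).
  by move=> BB1B; rewrite -[in LHS]BB1B !mulmxA.
have M_B1' (B1 : 'M_(p, n)) : g1 B B1 -> A *m B *m C = A *m B *m (B1 *m B *m C).
  by move=> BB1B; rewrite -[in LHS]BB1B !mulmxA.
repeat split.
- by move=> A1 X /mx_lcancel_g1 hA; apply: g1_lmul; rewrite M_A; apply: mx_lcancelMr.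
- by move=> C1 X /mx_rcancel_g1 hC; apply: g1_rmul; apply: mx_rcancelMl.
- by move=> X; apply: g1_lmul; rewrite M_A; apply/mx_lcancelMr/mx_lcancel_ctr.
- by move=> X; apply/g1_rmul/mx_rcancelMl/mx_rcancel_ctr.
- by move=> X; apply: g1_lmul; rewrite M_A; apply/mx_lcancelMr/mx_lcancel_mul_ctr.
- by move=> X; apply/g1_rmul/mx_rcancelMl/mx_rcancel_ctr_mul.
- move=> A1 C1 X /mx_lcancel_g1 hA /mx_rcancel_g1 hC; apply: g1_sandwich.
    by rewrite M_A; apply: mx_lcancelMr.
  exact: mx_rcancelMl.
- move=> X; apply: g1_sandwich; last exact/mx_rcancelMl/mx_rcancel_ctr.
  by rewrite M_A; apply/mx_lcancelMr/mx_lcancel_ctr.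
- by move=> G X /mx_lcancel_g1 hG; apply: g1_lmul; apply: mx_lcancelMr.
- by move=> G X /mx_rcancel_g1 hG; apply: g1_rmul; rewrite M_A; apply: mx_rcancelMl.
- by move=> X; apply/g1_lmul/mx_lcancelMr/mx_lcancel_ctr.
- by move=> X; apply: g1_rmul; rewrite M_A; apply/mx_rcancelMl/mx_rcancel_ctr.
- move=> B1 G X hB /(mx_lcancel_g1_mul_g1 hB) hG.
  by apply: g1_lmul; apply: mx_lcancelMr.
- move=> B1 G X hB /(mx_rcancel_g1_g1_mul hB) hG.
  by apply: g1_rmul; rewrite M_A; apply: mx_rcancelMl.
- by move=> G X /mx_lcancel_g1_mul_ctr hG; apply: g1_lmul; apply: mx_lcancelMr.
- by move=> G X /mx_rcancel_g1_ctr_mul hG; apply: g1_rmul; rewrite M_A; apply: mx_rcancelMl.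
- move=> X; apply: g1_sandwich; last exact/mx_rcancelMl/mx_rcancel_ctr_mul.
  by rewrite M_A; apply/mx_lcancelMr/mx_lcancel_mul_ctr.
- move=> G1 G2 X /mx_lcancel_g1 h1 /mx_rcancel_g1 h2; apply: g1_sandwich.
    exact: mx_lcancelMr.
  by rewrite M_A; apply: mx_rcancelMl.
- move=> X; apply: g1_sandwich; first exact/mx_lcancelMr/mx_lcancel_ctr.
  by rewrite M_A; apply/mx_rcancelMl/mx_rcancel_ctr.
- move=> B1 G1 G2 X hB /(mx_lcancel_g1_mul_g1 hB) h1 /(mx_rcancel_g1_g1_mul hB) h2.
  apply: g1_sandwich; first exact: mx_lcancelMr.
  by rewrite M_A; apply: mx_rcancelMl.
- move=> G1 G2 X /mx_lcancel_g1_mul_ctr h1 /mx_rcancel_g1_ctr_mul h2.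
  apply: g1_sandwich; first exact: mx_lcancelMr.
  by rewrite M_A; apply: mx_rcancelMl.
- move=> B1 X hB; apply: g1_sandwich.
    by rewrite (M_B1 B1 hB); apply/mx_lcancelMr/mx_lcancel_ctr.
  by rewrite (M_B1' B1 hB); apply/mx_rcancelMl/mx_rcancel_ctr.
- move=> X; apply: g1_sandwich; first exact/mx_lcancelMr/mx_lcancel_ctr_mul_ctr.
  by rewrite M_A; apply/mx_rcancelMl/mx_rcancel_ctr_ctr_mul.
Qed.
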